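(* Let $I$ and $J$ be compositions of $n$, and let $M(I,J)$ be the set of matrices $M$ with nonnegative integer entries and no zero row such that $\mathrm{WC}(w(M))=I$ and the vector of column sums of $M$ is $J$. Then the coefficient $C_I^J(q)$ of $\Psi_I$ in $S^J(q)$ is \[ C_I^J(q)=\sum_{M\in M(I,J)}q^{\mathrm{sinv}(w(M))}. \]
   Context: For a nonnegative integer matrix $M=(m_{ij})$, $w(M)$ is the word obtained by reading the entries columnwise (columns left to right, each column top to bottom) and writing the row index $i$ repeated $m_{ij}$ times for each entry $m_{ij}$. A composition of $n$ is a sequence of positive integers with sum $n$. Over $\mathbb K(q)$ ($\mathrm{char}\,\mathbb K=0$): packed words are words with letter set $\{1,\dots,m\}$ for some $m$; $\mathrm{pack}$ replaces the $t$-th smallest letter by $t$. For a packed word $w=w_1\cdots w_n$: $\mathrm{WC}(w)$ is the composition of $n$ whose descent set (partial sums other than $n$) is the set of positions $p<n$ with $w_p$ not occurring in $w_{p+1}\cdots w_n$; $\mathrm{sinv}(w)=\#\{i<j:w_i>w_j,\ w_j\text{ not occurring in }w_{j+1}\cdots w_n\}$. $\mathbf{WQSym}$ has basis $\mathbf M_u$ with $\mathbf M_{u'}\mathbf M_{u''}=\sum\mathbf M_u$ over packed $u=v\cdot w$ with $\mathrm{pack}(v)=u'$, $\mathrm{pack}(w)=u''$; $\mathbf M_{u'}\star_q\mathbf M_{u''}=\sum q^{\mathrm{sinv}(u)-\mathrm{sinv}(u')-\mathrm{sinv}(u'')}\mathbf M_u$ (associative). $\mathbf{Sym}$ is the quotient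 by the span of $\mathbf M_u-\mathbf M_v$ with $\mathrm{WC}(u)=\mathrm{WC}(v)$, $\zeta$ the quotient map, $\Psi_I=\zeta(\mathbf M_u)$ for $\mathrm{WC}(u)=I$ (a basis). $\tilde S_m=\sum\mathbf M_u$ over nondecreasing packed $u$ of length $m$; for $J=(j_1,\dots,j_l)$, $S^J(q)=\zeta(\tilde S_{j_1}\star_q\cdots\star_q\tilde S_{j_l})$. *)

From HB Require Import structures.
From mathcomp Require Import all_boot all_order all_algebra.
From mathcomp Require Import fraction.
Set Implicit Arguments. Unset Strict Implicit. Unset Printing Implicit Defensive.
Import Order.TTheory GRing.Theory Num.Theory.

(* Words are seq nat; letters of packed words are 1..m. *)
Definition maxl (w : seq nat) : nat := foldr maxn 0 w.

Definition packed (w : seq nat) : bool :=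
  all (fun x => 0 < x) w && all (fun t => t \in w) (iota 1 (maxl w)).

Definition pack (w : seq nat) : seq nat :=
  [seq (index x (sort leq (undup w))).+1 | x <- w].

Definition lastocc (w : seq nat) (p : nat) : bool :=
  nth 0 w p \notin drop p.+1 w.

(* WC(w): composition of size w whose descent set is the set of (1-indexed)
   positions p < size w such that w_p does not occur in w_{p+1}...w_n. *)
Definition WC (w : seq nat) : seq nat :=
  if size w is 0 then [::] else
  let D := [seq p <- iota 1 (size w).-1 | lastocc w p.-1] in
  pairmap (fun a b => b - a) 0 (rcons D (size w)).

Definition sinv (w : seq nat) : nat :=
  \sum_(j < size w) \sum_(i < j) ((nth 0 w j < nth 0 w i) && lastocc w j : nat).

Definition is_composition (n : nat) (I : seq nat) : bool :=
  all (fun x => 0 < x) I && (sumn I == n).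

Local Open Scope ring_scope.

Definition Kq (K : fieldType) := {fraction {poly K}}.
Definition qK (K : fieldType) : Kq K := tofrac 'X.

(* An element of WQSym over K(q): its coefficient function u |-> [M_u],
   meaningful on packed words u (finitely supported in all uses below). *)
Definition WQ (K : fieldType) := seq nat -> Kq K.

(* The bilinear extension of
   M_{u'} *_q M_{u''} = sum_{u = v.w, pack v = u', pack w = u''}
                           q^{sinv u - sinv u' - sinv u''} M_u,
   expressed coefficientwise: for a packed u each split u = v.w
   (v = take k u) determines u' = pack v and u'' = pack w. *)
Definition star_q (K : fieldType) (f g : WQ K) : WQ K := fun u =>
  if packed u then
    \sum_(k < (size u).+1)
      f (pack (take k u)) * g (pack (drop k u)) *
      qK K ^ ((sinv u)%:Z - (sinv (pack (take k u)))%:Z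
                          - (sinv (pack (drop k u)))%:Z)
  else 0.

(* tilde S_m = sum of M_u over nondecreasing packed u of length m *)
Definition Stilde (K : fieldType) (m : nat) : WQ K := fun u =>
  (packed u && sorted leq u && (size u == m))%:R.

Definition unitWQ (K : fieldType) : WQ K := fun u => (u == [::])%:R.

Definition Sprod (K : fieldType) (J : seq nat) : WQ K :=
  foldr (fun j acc => star_q (Stilde K j) acc) (unitWQ K) J.

(* packed words of length n are words over {1..n}; encode them by tuples *)
Definition word_of (n : nat) (t : n.-tuple 'I_n) : seq nat :=
  [seq (val i).+1 | i <- t].

(* coefficient of Psi_I in zeta(F), where zeta(M_u) = Psi_{WC(u)}:
   the sum of the coefficients of F at packed u (of length n) with WC(u) = I *)
Definition coeffPsi (K : fieldType) (n : nat) (I : seq nat) (F : WQ K) : Kq K :=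
  \sum_(t : n.-tuple 'I_n | packed (word_of t) && (WC (word_of t) == I))
     F (word_of t).

Definition wM (r l : nat) (M : 'M[nat]_(r, l)) : seq nat :=
  flatten [seq nseq (M i j) (val i).+1 | j <- enum 'I_l, i <- enum 'I_r].

Definition inMIJ (I J : seq nat) (r : nat) (M : 'M[nat]_(r, size J)) : bool :=
  [forall i, exists j, M i j != 0%N] && (WC (wM M) == I) &&
  [forall j : 'I_(size J), (\sum_(i < r) M i j)%N == nth 0%N J j].

Arguments inMIJ I J {r} M.

From HB Require Import structures.
From mathcomp Require Import all_boot all_order all_algebra.
From mathcomp Require Import fraction zify.
Import Order.TTheory GRing.Theory Num.Theory.

(* The coefficient of M_u in S^J(q) is q^sinv(u) when u, cut into consecutive
   blocks of lengths J, is nondecreasing on every block, and 0 otherwise: a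
   nondecreasing word has sinv = 0, so the q-powers of the successive
   q-products telescope to q^sinv(u).  A word nondecreasing on the J-blocks is
   determined by the multiplicities of each letter i in each block j, i.e. by
   a matrix with column sums J, and w(M) reads this word back; the word is
   packed exactly when the matrix has no zero row, its number of rows being
   the largest letter.  Summing over that number gives the theorem. *)

Lemma geq_maxl w m : (maxl w <= m)%N = all (fun x => x <= m)%N w.
Proof. by elim: w => //= a w IH; rewrite geq_max IH. Qed.

Lemma leq_maxl w x : x \in w -> (x <= maxl w)%N.
Proof.
by move=> xw; move: (leqnn (maxl w)); rewrite geq_maxl => /allP; apply.
Qed.

Lemma reindex_on_bij {R : Type} {idx : R} {op : Monoid.com_law idx}
    {I I' : finType} {P : pred I} {P' : pred I'} (h : I' -> I) (h' : I -> I')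
    {F : I -> R} :
    (forall i, P i -> P' (h' i) /\ h (h' i) = i) ->
    (forall j, P' j -> P (h j) /\ h' (h j) = j) ->
  \big[op/idx]_(i | P i) F i = \big[op/idx]_(j | P' j) F (h j).
Proof.
move=> hK h'K; rewrite (reindex_onto h h') => [|i /hK[]//].
apply: eq_bigl => j; apply/andP/idP => [[/hK[Q_hj _] /eqP hj] | /h'K[-> ->]].
  by rewrite -hj.
by rewrite eqxx.
Qed.

Definition pack_letter (w : seq nat) x := (index x (sort leq (undup w))).+1.

Lemma packE w : pack w = map (pack_letter w) w. Proof. by []. Qed.

Lemma pack_letter_mono w : {in w &, {mono pack_letter w : x y / (x <= y)%N}}.
Proof.
move=> x y xw yw; set s := sort leq (undup w).
have ss : sorted leq s := sort_sorted leq_total _.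
have xs : x \in s by rewrite mem_sort mem_undup.
have ys : y \in s by rewrite mem_sort mem_undup.
rewrite /pack_letter ltnS -/s; apply/idP/idP => [|le_xy].
  exact: (sorted_leq_index leq_trans leqnn ss _ _ xs ys).
rewrite leqNgt; apply/negP => lt_yx.
have le_yx := sorted_ltn_index leq_trans ss _ _ ys xs lt_yx.
by move: lt_yx; rewrite (@anti_leq x y) ?le_xy ?ltnn.
Qed.

Lemma packed_pack w : packed (pack w).
Proof.
rewrite /packed; apply/andP; split; first by apply/allP => x /mapP[y _ ->].
set s := sort leq (undup w).
have us : uniq s by rewrite sort_uniq undup_uniq.
have max_s : (maxl (pack w) <= size s)%N.
  rewrite geq_maxl; apply/allP => x /mapP[y yw ->].
  by rewrite /pack_letter -/s index_mem mem_sort mem_undup.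
apply/allP => t; rewrite mem_iota => /andP[t_gt0 t_le].
have t_lt : (t.-1 < size s)%N by move: t_le max_s; lia.
have xw : nth 0%N s t.-1 \in w by rewrite -mem_undup -(mem_sort leq) mem_nth.
have -> : t = pack_letter w (nth 0%N s t.-1) by rewrite /pack_letter index_uniq //; lia.
exact: map_f.
Qed.

Lemma sorted_pack w : sorted leq (pack w) = sorted leq w.
Proof. by rewrite packE (mono_sorted_in (pack_letter_mono w)) //; apply/allP. Qed.

Lemma sinv_sorted w : sorted leq w -> sinv w = 0%N.
Proof.
move=> sw; rewrite /sinv big1 // => j _; rewrite big1 // => i _.
have : (nth 0 w i <= nth 0 w j)%N.
  apply: (sorted_leq_nth leq_trans leqnn 0 sw); rewrite ?inE //.
  - exact: ltn_trans (ltn_ord i) (ltn_ord j).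
  - exact: ltnW (ltn_ord i).
by rewrite leqNgt => /negbTE ->.
Qed.

Definition blockwise_sorted (J w : seq nat) :=
  (size w == sumn J) && all (sorted leq) (reshape J w).

Lemma mem_reshape {J w s : seq nat} : s \in reshape J w -> {subset s <= w}.
Proof.
elim: J w => [|j J IH] w //=; rewrite in_cons => /orP[/eqP -> | /IH sub] x.
  exact: mem_take.
by move/sub; apply: mem_drop.
Qed.

Lemma blockwise_sorted_pack J w : blockwise_sorted J (pack w) = blockwise_sorted J w.
Proof.
rewrite /blockwise_sorted packE size_map -map_reshape all_map; congr andb.
apply: eq_in_all => s s_in /=; rewrite (mono_sorted_in (pack_letter_mono w)) //.
by apply/allP => x /(mem_reshape s_in).
Qed.

Lemma blockwise_sorted_cons j J w : (j <= size w)%N ->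
  blockwise_sorted (j :: J) w =
  sorted leq (take j w) && blockwise_sorted J (drop j w).
Proof.
move=> le_jw; rewrite /blockwise_sorted /= size_drop.
have -> : (size w == j + sumn J) = (size w - j == sumn J) by apply/eqP/eqP; lia.
by case: (_ == _); case: sorted.
Qed.

Local Open Scope ring_scope.

Lemma qK_neq0 K : qK K != 0.
Proof. by rewrite tofrac_eq0 polyX_eq0. Qed.

Lemma Sprod_coef K J u : Sprod K J u =
  if packed u && blockwise_sorted J u then qK K ^+ sinv u else 0.
Proof.
elim: J u => [|j J IH] u.
  case: u => [|a u]; rewrite /= /unitWQ /blockwise_sorted ?andbF //.
  by rewrite /sinv big_ord0 expr0.
rewrite /= {1}/star_q; case: (packed u) => //=.
have Stilde_take (k : 'I_(size u).+1) : k != j :> nat ->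
    Stilde K j (pack (take k u)) = 0.
  move=> kj; rewrite /Stilde size_map size_takel ?(ltnSE (ltn_ord k)) //.
  by rewrite (negbTE kj) andbF.
case: (leqP j (size u)) => le_ju; last first.
  rewrite big1 => [|k _]; last first.
    by rewrite Stilde_take ?mul0r //; move: (ltn_ord k) le_ju; lia.
  rewrite /blockwise_sorted /=; case: eqP => [e|//].
  by move: le_ju; rewrite e ltnNge leq_addr.
rewrite (bigD1 (Ordinal (le_ju : (j < (size u).+1)%N))) //= big1 ?addr0; last first.
  by move=> k nkj; rewrite Stilde_take ?mul0r.
rewrite /Stilde size_map size_takel // eqxx andbT packed_pack sorted_pack.
rewrite IH packed_pack blockwise_sorted_pack blockwise_sorted_cons //.
case st: (sorted leq (take j u)); last by rewrite !mul0r.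
rewrite (@sinv_sorted (pack (take j u))) ?sorted_pack //.
case: blockwise_sorted; last by rewrite mulr0 mul0r.
by rewrite mul1r !exprnP -expfzDr ?qK_neq0 //; congr (_ ^ _); lia.
Qed.

Lemma sumn_map_enum (T : finType) (F : T -> nat) :
  sumn [seq F i | i <- enum T] = (\sum_i F i)%N.
Proof. by rewrite sumnE big_map big_enum. Qed.

Lemma map_nth_enum {T : Type} (x0 : T) {s : seq T} {m : nat} : size s = m ->
  [seq nth x0 s (val j) | j <- enum 'I_m] = s.
Proof.
move=> <-; rewrite -[LHS]/(map (nth x0 s \o val) _) map_comp val_enum_ord.
exact: mkseq_nth.
Qed.

Lemma sorted_flatten_nseq (T : eqType) (s : seq T) (c key : T -> nat) :
  sorted leq (map key s) -> sorted leq (flatten [seq nseq (c x) (key x) | x <- s]).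
Proof.
rewrite !(sorted_pairwise leq_trans); elim: s => //= x s IH /andP[key_x key_s].
rewrite pairwise_cat IH // andbT; apply/andP; split.
  apply/allrelP => y z; rewrite mem_nseq => /andP[_ /eqP ->] /flatten_mapP[x' x's].
  by rewrite mem_nseq => /andP[_ /eqP ->]; move/allP: key_x; apply; apply: map_f.
elim: (c x) => //= k IHk; rewrite IHk andbT.
by apply/allP => y; rewrite mem_nseq => /andP[_ /eqP ->].
Qed.

Section ColumnWord.
Context {r : nat}.
Implicit Type c : 'I_r -> nat.

Definition col_word c : seq nat := flatten [seq nseq (c i) (val i).+1 | i <- enum 'I_r].

Lemma eq_col_word c c' : c =1 c' -> col_word c = col_word c'.
Proof. by move=> eq_c; rewrite /col_word; under eq_map do rewrite eq_c. Qed.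

Lemma sorted_col_word c : sorted leq (col_word c).
Proof.
apply: sorted_flatten_nseq; rewrite -[map _ _]/(map (succn \o val) _) map_comp.
by rewrite val_enum_ord sorted_map iota_sorted.
Qed.

Lemma size_col_word c : size (col_word c) = (\sum_i c i)%N.
Proof.
rewrite size_flatten /shape -map_comp sumn_map_enum.
by apply: eq_bigr => i _; rewrite /= size_nseq.
Qed.

Lemma mem_col_word c x : x \in col_word c -> (0 < x <= r)%N.
Proof. by move/flatten_mapP => [i _]; rewrite mem_nseq => /andP[_ /eqP ->] /=. Qed.

Lemma count_col_wordE c x :
  count_mem x (col_word c) = (\sum_(i < r) (x == (val i).+1) * c i)%N.
Proof.
rewrite count_flatten -map_comp sumn_map_enum; apply: eq_bigr => i _.
by rewrite /= count_nseq eq_sym.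
Qed.

Lemma count_col_word c (i : 'I_r) : count_mem (val i).+1 (col_word c) = c i.
Proof.
rewrite count_col_wordE (bigD1 i) //= eqxx mul1n big1 ?addn0 // => k nki.
by rewrite eqSS val_eqE eq_sym (negbTE nki).
Qed.

Lemma col_word_count s : sorted leq s -> {in s, forall x, 0 < x <= r}%N ->
  col_word (fun i => count_mem (val i).+1 s) = s.
Proof.
move=> ss s_le; apply: (sorted_eq leq_trans anti_leq) (sorted_col_word _) ss _.
apply/allP => x _; apply/eqP; have [x_in | x_out] := boolP (0 < x <= r)%N.
  have x_lt : (x.-1 < r)%N by move: x_in; lia.
  have -> : x = (val (Ordinal x_lt)).+1 by move: x_in => /= ; lia.
  by rewrite count_col_word.
rewrite count_col_wordE big1 => [|[i i_lt] _ /=]; last first.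
  by case: eqP => [ex|]; [move: x_out i_lt; rewrite ex; lia | rewrite mul0n].
by apply/esym/count_memPn; apply: contra x_out => /s_le.
Qed.

End ColumnWord.

Section MatrixReading.
Variables r l : nat.
Implicit Type N : 'M[nat]_(r, l).

Lemma wM_col_words N :
  wM N = flatten [seq col_word (fun i => N i j) | j <- enum 'I_l].
Proof. by rewrite /wM /col_word; elim: (enum 'I_l) => //= j s <-; rewrite flatten_cat. Qed.

Lemma mem_wM N x : x \in wM N -> (0 < x <= r)%N.
Proof. by rewrite wM_col_words => /flattenP[s /mapP[j _ ->] /mem_col_word]. Qed.

Lemma row_in_wM N (i : 'I_r) : ((val i).+1 \in wM N) = [exists j, N i j != 0%N].
Proof.
rewrite wM_col_words; apply/flattenP/existsP => [[s /mapP[j _ ->]] | [j Nij]].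
  by rewrite -has_pred1 has_count count_col_word lt0n; exists j.
exists (col_word (fun i => N i j)); first by apply: map_f; rewrite mem_enum.
by rewrite -has_pred1 has_count count_col_word lt0n.
Qed.
Lemma maxl_wM N : (forall i, [exists j, N i j != 0%N]) -> maxl (wM N) = r.
Proof.
move=> rows; apply/eqP; rewrite eqn_leq geq_maxl; apply/andP; split.
  by apply/allP => x /mem_wM /andP[].
have [r0 | r_gt0] := posnP r; first by rewrite {1}r0.
have r_lt : (r.-1 < r)%N by rewrite ltn_predL.
have := @leq_maxl (wM N) (val (Ordinal r_lt)).+1.
by rewrite row_in_wM rows /= prednK //; apply.
Qed.

Lemma packed_wM N : (forall i, [exists j, N i j != 0%N]) -> packed (wM N).
Proof.
move=> rows; rewrite /packed maxl_wM //; apply/andP; split.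
  by apply/allP => x /mem_wM /andP[].
apply/allP => x; rewrite mem_iota => /andP[x_gt0 x_le].
have x_lt : (x.-1 < r)%N by move: x_gt0 x_le; lia.
by have := row_in_wM N (Ordinal x_lt); rewrite /= prednK // rows.
Qed.

End MatrixReading.

Lemma mem_packed {w x} : packed w -> x \in w -> (0 < x <= maxl w)%N.
Proof. by case/andP => /allP pos _ xw; rewrite pos ?leq_maxl. Qed.

Section MatrixOfWord.
Context {r : nat} {J : seq nat}.
Implicit Types (N : 'M[nat]_(r, size J)) (w : seq nat).

Definition col_sums_eq N := forall j : 'I_(size J), (\sum_(i < r) N i j)%N = nth 0%N J j.

Lemma shape_col_words {N} : col_sums_eq N ->
  shape [seq col_word (fun i => N i j) | j <- enum 'I_(size J)] = J.
Proof.
move=> colN; rewrite /shape -map_comp.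
rewrite -[RHS](map_nth_enum 0%N (erefl (size J))).
by apply: eq_map => j /=; rewrite size_col_word colN.
Qed.

Lemma reshape_wM {N} : col_sums_eq N ->
  reshape J (wM N) = [seq col_word (fun i => N i j) | j <- enum 'I_(size J)].
Proof. by move=> colN; rewrite wM_col_words -{1}(shape_col_words colN) flattenK. Qed.

Lemma size_wM {N} : col_sums_eq N -> size (wM N) = sumn J.
Proof. by move=> colN; rewrite wM_col_words size_flatten shape_col_words. Qed.

Lemma blockwise_sorted_wM {N} : col_sums_eq N -> blockwise_sorted J (wM N).
Proof.
move=> colN; rewrite /blockwise_sorted size_wM // eqxx reshape_wM //=.
by apply/allP => s /mapP[j _ ->]; apply: sorted_col_word.
Qed.

Definition mx_of_word w : 'M[nat]_(r, size J) :=
  \matrix_(i, j) count_mem (val i).+1 (nth [::] (reshape J w) j).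

Lemma mx_of_wordK {N} : col_sums_eq N -> mx_of_word (wM N) = N.
Proof.
move=> colN; apply/matrixP => i j; rewrite mxE reshape_wM //.
by rewrite (nth_map j) ?size_enum_ord // nth_ord_enum count_col_word.
Qed.

Lemma mx_of_word_le_size w i j : (mx_of_word w i j <= size w)%N.
Proof.
rewrite mxE (leq_trans (count_size _ _)) // nth_reshape size_take_min size_drop.
exact: leq_trans (geq_minr _ _) (leq_subr _ _).
Qed.

Section BlockwiseSorted.
Variable w : seq nat.
Hypotheses (sorted_w : blockwise_sorted J w) (w_le : {in w, forall x, 0 < x <= r}%N).

Lemma col_word_mx_of_word (j : 'I_(size J)) :
  col_word (fun i => mx_of_word w i j) = nth [::] (reshape J w) j.
Proof.
have block_in : nth [::] (reshape J w) j \in reshape J w.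
  by rewrite mem_nth // size_reshape.
rewrite -[RHS](@col_word_count r); first by apply: eq_col_word => i; rewrite mxE.
  by case/andP: sorted_w => _ /allP; apply.
by move=> x /(mem_reshape block_in) /w_le.
Qed.

Lemma wM_mx_of_word : wM (mx_of_word w) = w.
Proof.
rewrite wM_col_words (eq_map col_word_mx_of_word) map_nth_enum ?size_reshape //.
by rewrite reshapeKr //; case/andP: sorted_w => /eqP ->.
Qed.

Lemma col_sums_mx_of_word : col_sums_eq (mx_of_word w).
Proof.
move=> j; rewrite -size_col_word col_word_mx_of_word.
rewrite -(nth_map [::] 0%N size) ?size_reshape // -/(shape _) reshapeKl //.
by case/andP: sorted_w => /eqP ->.
Qed.

End BlockwiseSorted.
End MatrixOfWord.
Arguments mx_of_word : clear implicits.

Definition MIJ_word (I J : seq nat) (r : nat) (w : seq nat) :=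
  [&& packed w, WC w == I, blockwise_sorted J w & maxl w == r].

Lemma inMIJ_col_sums {I J r} {N : 'M[nat]_(r, size J)} : inMIJ I J N -> col_sums_eq N.
Proof. by case/andP => _ /forallP colN j; apply/eqP. Qed.

Lemma MIJ_word_wM I J r (N : 'M[nat]_(r, size J)) : inMIJ I J N -> MIJ_word I J r (wM N).
Proof.
move=> N_MIJ; have colN := inMIJ_col_sums N_MIJ.
case/andP: N_MIJ => /andP[/forallP rows WC_I] _.
by rewrite /MIJ_word packed_wM // WC_I blockwise_sorted_wM // maxl_wM ?eqxx.
Qed.

Lemma inMIJ_mx_of_word I J r w : MIJ_word I J r w -> inMIJ I J (mx_of_word r J w).
Proof.
case/and4P => pw WC_I sorted_w /eqP max_w.
have w_le : {in w, forall x, 0 < x <= r}%N by move=> x /(mem_packed pw); rewrite max_w.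
rewrite /inMIJ wM_mx_of_word // WC_I andbT; apply/andP; split.
  apply/forallP => i; rewrite -row_in_wM wM_mx_of_word //.
  by case/andP: pw => _ /allP; apply; rewrite max_w mem_iota /= add1n ltnS ltn_ord.
by apply/forallP => j; apply/eqP; apply: col_sums_mx_of_word.
Qed.

Section Tuples.
Variable n : nat.

(* Inverse of word_of on words of length n over {1..n}; junk elsewhere. *)
Definition tuple_of_word (w : seq nat) : n.-tuple 'I_n :=
  [tuple insubd i (nth 0%N w i).-1 | i < n].

Lemma word_ofE (t : n.-tuple 'I_n) :
  word_of t = [seq (val (tnth t i)).+1 | i <- enum 'I_n].
Proof. by rewrite /word_of -{1}(map_tnth_enum t) -map_comp. Qed.

Lemma mem_word_of (t : n.-tuple 'I_n) x : x \in word_of t -> (0 < x <= n)%N.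
Proof. by move/mapP => [i _ ->] /=. Qed.

Lemma word_ofK : cancel (@word_of n) tuple_of_word.
Proof.
move=> t; apply: eq_from_tnth => i; rewrite tnth_mktuple; apply: val_inj.
rewrite word_ofE (nth_map i) ?size_enum_ord // nth_ord_enum /=.
by rewrite insubdK // -topredE /=.
Qed.

Lemma tuple_of_wordK w : size w = n -> {in w, forall x, 0 < x <= n}%N ->
  word_of (tuple_of_word w) = w.
Proof.
move=> size_w w_le; rewrite word_ofE -[RHS](map_nth_enum 0%N size_w).
apply: eq_map => i; rewrite tnth_mktuple /=.
have i_lt : (i < size w)%N by rewrite size_w.
have /andP[x_gt0 x_le] := w_le _ (mem_nth 0%N i_lt).
by rewrite insubdK ?prednK //; move: x_gt0 x_le; rewrite /= -ltnS; case: nth.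
Qed.

End Tuples.

Lemma map_mx_val_inord n m l (N : 'M[nat]_(m, l)) :
  (forall i j, N i j <= n)%N -> map_mx val (map_mx (@inord n) N) = N.
Proof.
by move=> N_le; apply/matrixP => i j; rewrite !mxE; apply: inordK; rewrite ltnS.
Qed.

Lemma sum_MIJ_words {R : Type} {idx : R} {op : Monoid.com_law idx}
    (F : seq nat -> R) {n I J r} :
    sumn J = n -> (r <= n)%N ->
  \big[op/idx]_(t : n.-tuple 'I_n | MIJ_word I J r (word_of t)) F (word_of t) =
  \big[op/idx]_(M : 'M['I_n.+1]_(r, size J) | inMIJ I J (map_mx val M))
     F (wM (map_mx val M)).
Proof.
move=> sumJ le_rn.
pose h (M : 'M['I_n.+1]_(r, size J)) := tuple_of_word n (wM (map_mx val M)).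
have word_of_h M : inMIJ I J (map_mx val M) -> word_of (h M) = wM (map_mx val M).
  move=> M_MIJ; rewrite tuple_of_wordK //.
    by rewrite (size_wM (inMIJ_col_sums M_MIJ)).
  by move=> x /mem_wM /andP[-> x_le] /=; apply: leq_trans le_rn.
rewrite (reindex_on_bij (P' := fun M => inMIJ I J (map_mx val M)) h
  (fun t => map_mx inord (mx_of_word r J (word_of t)))).
- by apply: eq_bigr => M /word_of_h ->.
- move=> t t_MIJ; rewrite /h; set w := word_of t.
  have size_w : size w = n by rewrite size_map size_tuple.
  have -> : map_mx val (map_mx (@inord n) (mx_of_word r J w)) = mx_of_word r J w.
    by apply: map_mx_val_inord => i j; rewrite -size_w mx_of_word_le_size.
  split; first exact: inMIJ_mx_of_word.
  case/and4P: t_MIJ => pw _ sorted_w /eqP max_w.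
  rewrite wM_mx_of_word ?word_ofK // => x /(mem_packed pw).
  by rewrite max_w.
move=> M M_MIJ; rewrite word_of_h //; split; first exact: MIJ_word_wM.
rewrite (mx_of_wordK (inMIJ_col_sums M_MIJ)).
by apply/matrixP => i j; rewrite !mxE inord_val.
Qed.

Local Open Scope ring_scope.

Theorem mainTheorem8 (K : fieldType) (hK : [pchar K] =i pred0)
  (n : nat) (I J : seq nat)
  (hI : is_composition n I) (hJ : is_composition n J) :
  coeffPsi n I (Sprod K J) =
  \sum_(r < n.+1)
    \sum_(M : 'M['I_n.+1]_(r, size J) | inMIJ I J (map_mx val M))
      qK K ^+ sinv (wM (map_mx val M)).
Proof.
have sumJ : sumn J = n by case/andP: hJ => _ /eqP.
rewrite /coeffPsi (eq_bigr _ (fun t _ => Sprod_coef K J (word_of t))) -big_mkcondr.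
rewrite (partition_big (fun t => inord (maxl (word_of t)) : 'I_n.+1) xpredT) //=.
apply: eq_bigr => r _; have le_rn : (r <= n)%N := ltnSE (ltn_ord r).
rewrite -(sum_MIJ_words (fun w => qK K ^+ sinv w) sumJ le_rn).
apply: eq_bigl => t; rewrite /MIJ_word -(inj_eq val_inj) /= inordK; last first.
  by rewrite ltnS geq_maxl; apply/allP => x /mem_word_of /andP[].
by case: packed; case: (WC _ == I); case: blockwise_sorted.
Qed.
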